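(* If $f$ has the saddle property, then the set $$\mathcal Q_{f\text{-DPI}}=\{Q \text{ pmf on }\mathcal Z:\ Q_S=P_S,\ \textstyle\sum_{s,\hat s}Q(s,x,y,\hat s)=P_{Y|X}(y|x)Q_X(x)\ \forall x,y,\ I_f(Q_{S,\widehat S})\le I_f(Q_{X,Y})\}$$ is convex.
   Context: $\mathcal S,\mathcal X,\mathcal Y,\widehat{\mathcal S}$ are finite nonempty sets, $\mathcal Z=\mathcal S\times\mathcal X\times\mathcal Y\times\widehat{\mathcal S}$, $P_S$ is a fixed pmf on $\mathcal S$ and $P_{Y|X}$ a fixed channel from $\mathcal X$ to $\mathcal Y$. For a pmf $Q$ on $\mathcal Z$, $Q_S,Q_X$ denote marginals and $Q_{S,\widehat S},Q_{X,Y}$ the pairwise marginals. For $f:(0,\infty)\to\mathbb R$ convex, let $f'(\infty)=\lim_{t\to\infty}f(t)/t\in(-\infty,+\infty]$; for a joint pmf $p(u,v)$ on a finite product set with marginals $p(u),p(v)$, $I_f(p)=\sum_{u,v}\phi(u,v)\in(-\infty,+\infty]$ where $\phi(u,v)=p(u,v)f(p(u)p(v)/p(u,v))$ if $p(u,v)>0$, $\phi(u,v)=p(u)p(v)f'(\infty)$ if $p(u,v)=0<p(u)p(v)$, and $\phi(u,v)=0$ if $p(u)p(v)=0$. A function $f$ has the saddle property if $f:(0,\infty)\to\mathbb R$ is convex and, for all finite sets $\mathcal U,\mathcal V$ and every kernel $p(v|u)$, the map $p_U\mapsto I_f\big(p_U(u)p(v|u)\big)$ is concave on the set of pmfs on $\mathcal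 U$. *)

From mathcomp Require Import all_boot.
From Stdlib Require Import Reals ClassicalEpsilon.
Set Implicit Arguments. Unset Strict Implicit. Unset Printing Implicit Defensive.

Open Scope R_scope.

Definition rsum (T : finType) (F : T -> R) : R := \big[Rplus/0]_(i : T) F i.

Definition is_pmf (T : finType) (p : T -> R) : Prop :=
  (forall t, 0 <= p t) /\ rsum p = 1.

Inductive ER : Type := Fin (r : R) | PInf.

Definition eradd (a b : ER) : ER :=
  match a, b with Fin x, Fin y => Fin (x + y) | _, _ => PInf end.

Definition ermul (r : R) (a : ER) : ER :=
  match a with Fin x => Fin (r * x) | PInf => PInf end.

Definition erle (a b : ER) : Prop :=
  match a, b with
  | Fin x, Fin y => x <= y
  | _, PInf => True
  | PInf, Fin _ => False
  end.

Definition convex_pos (f : R -> R) : Prop :=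
  forall x y l, 0 < x -> 0 < y -> 0 <= l <= 1 ->
    f (l * x + (1 - l) * y) <= l * f x + (1 - l) * f y.

Definition lim_infty (g : R -> R) (v : ER) : Prop :=
  match v with
  | Fin L => forall eps, 0 < eps -> exists M, forall t, M < t -> Rabs (g t - L) < eps
  | PInf => forall B, exists M, forall t, M < t -> B < g t
  end.

(* f'(oo) = lim_{t->oo} f(t)/t (exists in (-oo,+oo] for convex f) *)
Definition fprime_inf (f : R -> R) : ER :=
  epsilon (inhabits PInf) (fun v => lim_infty (fun t => f t / t) v).

Definition margU (U V : finType) (p : U -> V -> R) (u : U) : R := rsum (fun v => p u v).
Definition margV (U V : finType) (p : U -> V -> R) (v : V) : R := rsum (fun u => p u v).

Definition phi_f (f : R -> R) (U V : finType) (p : U -> V -> R) (u : U) (v : V) : ER :=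
  let q := margU p u * margV p v in
  if Rlt_dec 0 (p u v) then Fin (p u v * f (q / p u v))
  else if Rlt_dec 0 q then ermul q (fprime_inf f)
  else Fin 0.

Definition I_f (f : R -> R) (U V : finType) (p : U -> V -> R) : ER :=
  \big[eradd/Fin 0]_(u : U) \big[eradd/Fin 0]_(v : V) phi_f f p u v.

Definition saddle_property (f : R -> R) : Prop :=
  convex_pos f /\
  forall (U V : finType) (W : U -> V -> R),
    (forall u, is_pmf (W u)) ->
    forall (p1 p2 : U -> R) (l : R), is_pmf p1 -> is_pmf p2 -> 0 < l < 1 ->
      erle (eradd (ermul l (I_f f (fun u v => p1 u * W u v)))
                  (ermul (1 - l) (I_f f (fun u v => p2 u * W u v))))
           (I_f f (fun u v => (l * p1 u + (1 - l) * p2 u) * W u v)).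

(* pmf Q on Z = S x X x Y x Shat, written curried *)
Definition is_pmf4 (S X Y Sh : finType) (Q : S -> X -> Y -> Sh -> R) : Prop :=
  (forall s x y sh, 0 <= Q s x y sh) /\
  rsum (fun s => rsum (fun x => rsum (fun y => rsum (fun sh => Q s x y sh)))) = 1.

Definition Q_S (S X Y Sh : finType) (Q : S -> X -> Y -> Sh -> R) (s : S) : R :=
  rsum (fun x => rsum (fun y => rsum (fun sh => Q s x y sh))).
Definition Q_X (S X Y Sh : finType) (Q : S -> X -> Y -> Sh -> R) (x : X) : R :=
  rsum (fun s => rsum (fun y => rsum (fun sh => Q s x y sh))).
Definition Q_SSh (S X Y Sh : finType) (Q : S -> X -> Y -> Sh -> R) (s : S) (sh : Sh) : R :=
  rsum (fun x => rsum (fun y => Q s x y sh)).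
Definition Q_XY (S X Y Sh : finType) (Q : S -> X -> Y -> Sh -> R) (x : X) (y : Y) : R :=
  rsum (fun s => rsum (fun sh => Q s x y sh)).

Definition in_Q_fDPI (f : R -> R) (S X Y Sh : finType) (PS : S -> R)
    (PYX : X -> Y -> R) (Q : S -> X -> Y -> Sh -> R) : Prop :=
  is_pmf4 Q /\
  (forall s, Q_S Q s = PS s) /\
  (forall x y, rsum (fun s => rsum (fun sh => Q s x y sh)) = PYX x y * Q_X Q x) /\
  erle (I_f f (Q_SSh Q)) (I_f f (Q_XY Q)).

(* Let Q = l Q1 + (1 - l) Q2 with Q1, Q2 in Q_{f-DPI}.  All linear constraints
   (being a pmf, the S-marginal, the channel constraint on the (X,Y)-marginal)
   pass to the mixture, so the point is the inequality
     I_f(Q_{S,Sh}) <= l I_f(Q1_{S,Sh}) + (1-l) I_f(Q2_{S,Sh})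
                   <= l I_f(Q1_{X,Y}) + (1-l) I_f(Q2_{X,Y}) <= I_f(Q_{X,Y}).
   The last step is the saddle property, since Q_{X,Y} = Q_X * P_{Y|X}.
   The first step holds because Q1 and Q2 share the marginal Q_S = P_S: then
   the product of marginals is affine along the mixture, and each summand of
   I_f is the perspective (a,b) |-> a f(b/a) (extended by b f'(oo) at a = 0),
   which is jointly convex.  At the boundary a = 0 this uses that f(t)/t has a
   limit f'(oo) in (-oo,+oo] and that f(x + t) <= f(x) + t f'(oo). *)

From HB Require Import structures.
From mathcomp Require Import all_boot.
From Stdlib Require Import Reals Lra ClassicalEpsilon FunctionalExtensionality Classical.
Set Implicit Arguments.
Unset Strict Implicit.
Open Scope R_scope.

HB.instance Definition _ := Monoid.isComLaw.Build R 0 Rplus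
  (fun a b c => esym (Rplus_assoc a b c)) Rplus_comm Rplus_0_l.

Lemma rsum_exch (I J : finType) (F : I -> J -> R) :
  rsum (fun i => rsum (fun j => F i j)) = rsum (fun j => rsum (fun i => F i j)).
Proof. exact: exchange_big. Qed.

Lemma rsum_mix (I : finType) (F A B : I -> R) (a b : R) :
  (forall i, F i = a * A i + b * B i) -> rsum F = a * rsum A + b * rsum B.
Proof.
move=> FE; apply: (big_rec3 (fun x y z => x = a * y + b * z)); first ring.
by move=> i y1 y2 y3 _ ->; rewrite FE; ring.
Qed.

Lemma rsum_ge0 (I : finType) (F : I -> R) : (forall i, 0 <= F i) -> 0 <= rsum F.
Proof.
move=> F_ge0; apply: (big_ind (fun x => 0 <= x)) => //; [lra | move=> x y; lra].
Qed.

Lemma rsum_ge_term (I : finType) (F : I -> R) (j : I) :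
  (forall i, 0 <= F i) -> F j <= rsum F.
Proof.
move=> F_ge0; rewrite /rsum (bigD1 j) //=.
have : 0 <= \big[Rplus/0]_(i | i != j) F i.
  by apply: (big_ind (fun x => 0 <= x)) => //; [lra | move=> x y; lra].
lra.
Qed.

Lemma eradd_assoc : associative eradd.
Proof. by case=> [a|] [b|] [c|] //=; rewrite Rplus_assoc. Qed.

Lemma eradd_comm : commutative eradd.
Proof. by case=> [a|] [b|] //=; rewrite Rplus_comm. Qed.

Lemma eradd_0l : left_id (Fin 0) eradd.
Proof. by case=> [a|] //=; rewrite Rplus_0_l. Qed.

HB.instance Definition _ :=
  Monoid.isComLaw.Build ER (Fin 0) eradd eradd_assoc eradd_comm eradd_0l.

Lemma ermul_big (T : finType) (r : R) (F : T -> ER) :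
  ermul r (\big[eradd/Fin 0]_(i : T) F i) = \big[eradd/Fin 0]_(i : T) ermul r (F i).
Proof.
apply: big_morph; last by rewrite /= Rmult_0_r.
by move=> [x|] [y|] //=; rewrite Rmult_plus_distr_l.
Qed.

Lemma erle_add (a b c d : ER) : erle a c -> erle b d -> erle (eradd a b) (eradd c d).
Proof. by case: a => [a|]; case: b => [b|]; case: c => [c|]; case: d => [d|] //=; lra. Qed.

Lemma erle_trans (a b c : ER) : erle a b -> erle b c -> erle a c.
Proof. by case: a => [a|]; case: b => [b|]; case: c => [c|] //=; lra. Qed.

Lemma erle_mul (r : R) (a b : ER) : 0 <= r -> erle a b -> erle (ermul r a) (ermul r b).
Proof. by case: a => [a|]; case: b => [b|] //= r_ge0; apply: Rmult_le_compat_l. Qed.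

(* A termwise bound F i <= r1 G i + r2 H i sums up to the same bound on the
   sums; this is how convexity of I_f is reduced to its summands. *)
Lemma erle_big_mix (T : finType) (F G H : T -> ER) (r1 r2 : R) :
  (forall i, erle (F i) (eradd (ermul r1 (G i)) (ermul r2 (H i)))) ->
  erle (\big[eradd/Fin 0]_(i : T) F i)
       (eradd (ermul r1 (\big[eradd/Fin 0]_(i : T) G i))
              (ermul r2 (\big[eradd/Fin 0]_(i : T) H i))).
Proof.
move=> FGH; rewrite !ermul_big -big_split.
apply: (big_ind2 erle) => [/=|a b c d|i _]; [lra | exact: erle_add | exact: FGH].
Qed.

Lemma Rabs_bounds (x : R) : - Rabs x <= x <= Rabs x.
Proof. split_Rabs; lra. Qed.

Lemma Rlt_div_mul (a b e : R) : 0 < e -> a / e < b -> a < e * b.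
Proof.
move=> e_pos lt; have -> : a = e * (a / e) by field; lra.
exact: Rmult_lt_compat_l.
Qed.

(* A function nondecreasing on (a,+oo) has a limit at +oo in (-oo,+oo]:
   its supremum if bounded, +oo otherwise. *)
Lemma lim_mono_exists (h : R -> R) (a : R) :
  (forall s t, a < s -> s < t -> h s <= h t) -> exists v, lim_infty h v.
Proof.
move=> h_mono.
case: (classic (exists B, forall t, a < t -> h t <= B)) => [[B hB]|unbounded].
- set E := fun y => exists t, a < t /\ y = h t.
  have [L [L_ub L_least]] : {L | is_lub E L}.
    apply: completeness; first by exists B => y [t [ht ->]]; exact: hB.
    by exists (h (a + 1)), (a + 1); split => //; lra.
  exists (Fin L) => eps eps_pos /=.
  have [t0 [ht0 close]] : exists t0, a < t0 /\ L - eps < h t0.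
    apply: NNPP => none.
    have : L <= L - eps.
      apply: L_least => y [t [ht ->]]; apply: Rnot_lt_le => lt; apply: none.
      by exists t.
    lra.
  exists t0 => t tt0.
  have := h_mono t0 t ht0 tt0.
  have : h t <= L by apply: L_ub; exists t; split => //; lra.
  move=> *; apply: Rabs_def1; lra.
- exists PInf => C /=.
  have [t0 [ht0 large]] : exists t0, a < t0 /\ C < h t0.
    apply: NNPP => none; apply: unbounded; exists C => t ht.
    apply: Rnot_lt_le => lt; apply: none; by exists t.
  by exists t0 => t tt0; have := h_mono t0 t ht0 tt0; lra.
Qed.

(* If h -> v at +oo, then so does h t (t - 1) / t + c / t; this is the
   relation between f(t)/t and the chord slopes of f from the point 1. *)
Lemma lim_infty_damped (h g : R -> R) (c : R) (v : ER) :
  lim_infty h v -> (forall t, 1 < t -> g t = h t * (t - 1) / t + c / t) ->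
  lim_infty g v.
Proof.
case: v => [L|] /= h_lim gE.
- move=> eps eps_pos.
  have [M hM] := h_lim (eps / 2) ltac:(lra).
  set K := Rabs c + Rabs L + eps.
  exists (Rmax (Rmax M 1) (2 * K / eps)) => t /Rmax_Rlt [/Rmax_Rlt [tM t1] tK].
  have {}tK : 2 * K < eps * t by exact: Rlt_div_mul.
  have [hL1 hL2] := Rabs_def2 _ _ (hM t tM).
  have := Rabs_bounds c; have := Rabs_bounds L; rewrite /K in tK => bL bc.
  set u := (c - h t) / t.
  have uE : u * t = c - h t by rewrite /u; field; lra.
  have -> : g t - L = (h t - L) + u by rewrite gE // /u; field; lra.
  have : - (eps / 2) < u < eps / 2.
    have t_pos : 0 < t by lra.
    by split; apply: (Rmult_lt_reg_r t) => //; lra.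
  by move=> ?; apply: Rabs_def1; lra.
- move=> C.
  have [M hM] := h_lim (2 * (Rabs C + Rabs c + 1)).
  exists (Rmax M 2) => t /Rmax_Rlt [tM t2].
  have := hM t tM; have := Rabs_bounds C; have := Rabs_bounds c => bc bC ht.
  rewrite gE; last lra.
  set a := h t * (t - 1) / t; set z := c / t.
  have aE : a * t = h t * (t - 1) by rewrite /a; field; lra.
  have zE : z * t = c by rewrite /z; field; lra.
  have t_pos : 0 < t by lra.
  have : Rabs C + Rabs c + 1 < a.
    by apply: (Rmult_lt_reg_r t) => //; rewrite aE; nra.
  have : - Rabs c <= z.
    by apply: (Rmult_le_reg_r t) => //; rewrite zE; nra.
  lra.
Qed.

Lemma lim_infty_lower (g : R -> R) (L D c : R) :
  lim_infty g (Fin L) -> (exists M, forall t, M < t -> D + c / t <= g t) -> D <= L.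
Proof.
move=> g_lim [M lower]; apply: Rnot_lt_le => LD.
have [M' hM'] := g_lim ((D - L) / 2) ltac:(lra).
set t := Rmax (Rmax M M') (Rmax 0 (2 * Rabs c / (D - L))) + 1.
have /Rmax_Rlt [/Rmax_Rlt [tM tM'] /Rmax_Rlt [t0 tc]] :
    Rmax (Rmax M M') (Rmax 0 (2 * Rabs c / (D - L))) < t by rewrite /t; lra.
have {}tc : 2 * Rabs c < (D - L) * t by apply: Rlt_div_mul => //; lra.
have [gL _] := Rabs_def2 _ _ (hM' t tM').
have := lower t tM; have := Rabs_bounds c => bc low.
set z := c / t; have zE : z * t = c by rewrite /z; field; lra.
rewrite -/z in low.
have : - ((D - L) / 2) < z by apply: (Rmult_lt_reg_r t) => //; rewrite zE; lra.
lra.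
Qed.

Section ConvexFunction.
Variable f : R -> R.
Hypothesis f_convex : convex_pos f.

Lemma slope_mono (x s t : R) : 0 < x -> x < s -> s < t ->
  (f s - f x) / (s - x) <= (f t - f x) / (t - x).
Proof.
move=> x_pos xs st.
set lam := (s - x) / (t - x).
have lam01 : 0 <= lam <= 1.
  split; first by apply: Rlt_le; apply: Rdiv_lt_0_compat; lra.
  by apply: (Rmult_le_reg_r (t - x)); [lra | rewrite /lam /Rdiv Rmult_assoc Rinv_l; lra].
have t_pos : 0 < t by lra.
have := @f_convex t x lam t_pos x_pos lam01.
have -> : lam * t + (1 - lam) * x = s by rewrite /lam; field; lra.
move=> conv.
apply: (Rmult_le_reg_l (s - x)); first lra.
have -> : (s - x) * ((f s - f x) / (s - x)) = f s - f x by field; lra.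
have -> : (s - x) * ((f t - f x) / (t - x)) = lam * (f t - f x) by rewrite /lam; field; lra.
lra.
Qed.

Lemma chord_below (x s y : R) : 0 < x -> x < s -> s <= y ->
  f x + (f s - f x) / (s - x) * (y - x) <= f y.
Proof.
move=> x_pos xs sy; case: (Req_dec s y) => [<-|sy'].
  by apply: Req_le; field; lra.
have := @slope_mono x s y x_pos xs ltac:(lra).
move/(Rmult_le_compat_r (y - x)) => /(_ ltac:(lra)).
have -> : (f y - f x) / (y - x) * (y - x) = f y - f x by field; lra.
lra.
Qed.

(* f(t)/t has a limit at +oo in (-oo,+oo]: the chord slopes from 1 are
   monotone, and f(t)/t differs from them by a damping factor. *)
Lemma fdiv_limit_exists : exists v, lim_infty (fun t => f t / t) v.
Proof.
set h := fun t => (f t - f 1) / (t - 1).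
have [v h_lim] : exists v, lim_infty h v.
  by apply: (@lim_mono_exists h 1) => s t s1 st; apply: slope_mono => //; lra.
exists v; apply: (@lim_infty_damped h _ (f 1) v h_lim) => t t1.
by rewrite /h; field; lra.
Qed.

Lemma fprime_lim : lim_infty (fun t => f t / t) (fprime_inf f).
Proof. exact: (epsilon_spec (inhabits PInf) _ fdiv_limit_exists). Qed.

(* Increments of f are bounded by f'(oo) when it is finite:
   f (x + t) <= f x + t f'(oo).  The chord slope over [x, x+t] is a lower
   bound for all later slopes, hence for the limit of f(y)/y. *)
Lemma incr_le_fprime (L x t : R) : lim_infty (fun s => f s / s) (Fin L) ->
  0 < x -> 0 < t -> f (x + t) <= f x + t * L.
Proof.
move=> f_lim x_pos t_pos.
set D := (f (x + t) - f x) / t.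
have -> : f (x + t) = f x + t * D by rewrite /D; field; lra.
suff DL : D <= L by apply: Rplus_le_compat_l; apply: Rmult_le_compat_l; lra.
apply: (@lim_infty_lower _ L D (f x - D * x) f_lim); exists (x + t) => y xty.
have := @chord_below x (x + t) y x_pos ltac:(lra) ltac:(lra).
have -> : x + t - x = t by ring.
rewrite -/D => chord.
apply: (Rmult_le_reg_r y); first lra.
have -> : f y / y * y = f y by field; lra.
have -> : (D + (f x - D * x) / y) * y = f x + D * (y - x) by field; lra.
lra.
Qed.

End ConvexFunction.

Definition persp (f : R -> R) (a b : R) : ER :=
  if Rlt_dec 0 a then Fin (a * f (b / a))
  else if Rlt_dec 0 b then ermul b (fprime_inf f)
  else Fin 0.

Lemma phi_fE (f : R -> R) (U V : finType) (p : U -> V -> R) (u : U) (v : V) :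
  phi_f f p u v = persp f (p u v) (margU p u * margV p v).
Proof. by []. Qed.

Lemma persp_pos (f : R -> R) (a b : R) : 0 < a -> persp f a b = Fin (a * f (b / a)).
Proof. by rewrite /persp; case: Rlt_dec. Qed.

Lemma persp_0_pos (f : R -> R) (b : R) : 0 < b -> persp f 0 b = ermul b (fprime_inf f).
Proof. by rewrite /persp; case: Rlt_dec => [h|h] /=; [exfalso; lra | case: Rlt_dec]. Qed.

Lemma persp_00 (f : R -> R) : persp f 0 0 = Fin 0.
Proof. by rewrite /persp; case: Rlt_dec => [h|h] //=; exfalso; lra. Qed.

Section Perspective.
Variable f : R -> R.
Hypothesis f_convex : convex_pos f.

(* Both masses positive: the classical perspective inequality, obtained
   from convexity of f with the weight mu = l a1 / (l a1 + (1 - l) a2). *)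
Lemma persp_convex_interior (l : R) (a1 a2 b1 b2 : R) :
  0 < l < 1 -> 0 < a1 -> 0 < a2 -> 0 < b1 -> 0 < b2 ->
  (l * a1 + (1 - l) * a2) * f ((l * b1 + (1 - l) * b2) / (l * a1 + (1 - l) * a2))
  <= l * (a1 * f (b1 / a1)) + (1 - l) * (a2 * f (b2 / a2)).
Proof.
move=> l01 a1_pos a2_pos b1_pos b2_pos.
set a := l * a1 + (1 - l) * a2.
have a_pos : 0 < a by rewrite /a; nra.
set mu := l * a1 / a.
have mu01 : 0 <= mu <= 1.
  split; first by apply: Rlt_le; apply: Rdiv_lt_0_compat => //; nra.
  apply: (Rmult_le_reg_r a) => //.
  have -> : l * a1 / a * a = l * a1 by field; lra.
  rewrite /a; nra.
have -> : (l * b1 + (1 - l) * b2) / a = mu * (b1 / a1) + (1 - mu) * (b2 / a2).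
  by rewrite /mu /a; field; repeat split; nra.
have ratio1 : 0 < b1 / a1 by apply: Rdiv_lt_0_compat.
have ratio2 : 0 < b2 / a2 by apply: Rdiv_lt_0_compat.
have conv := @f_convex _ _ _ ratio1 ratio2 mu01.
have w1 : a * mu = l * a1 by rewrite /mu; field; lra.
have w2 : a * (1 - mu) = (1 - l) * a2 by rewrite /mu /a; field; nra.
apply: (Rle_trans _ (a * (mu * f (b1 / a1) + (1 - mu) * f (b2 / a2)))).
  by apply: Rmult_le_compat_l => //; lra.
apply: Req_le.
transitivity ((a * mu) * f (b1 / a1) + (a * (1 - mu)) * f (b2 / a2)); first ring.
by rewrite w1 w2; ring.
Qed.

(* One mass zero: the extra term (1 - l) b2 is paid for by the bound
   f (x + t) <= f x + t f'(oo). *)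
Lemma persp_convex_half (l : R) (a1 b1 b2 : R) :
  0 < l < 1 -> 0 < a1 -> 0 < b1 -> 0 <= b2 ->
  erle (persp f (l * a1 + (1 - l) * 0) (l * b1 + (1 - l) * b2))
       (eradd (ermul l (persp f a1 b1)) (ermul (1 - l) (persp f 0 b2))).
Proof.
move=> l01 a1_pos b1_pos b2_ge0.
have -> : l * a1 + (1 - l) * 0 = l * a1 by ring.
rewrite (@persp_pos f a1 b1 a1_pos) persp_pos; last nra.
case: (Req_dec b2 0) => [->|b2_nz].
  rewrite persp_00 /=; apply: Req_le.
  have -> : (l * b1 + (1 - l) * 0) / (l * a1) = b1 / a1 by field; lra.
  ring.
rewrite persp_0_pos; last lra.
have := fprime_lim f_convex; case: (fprime_inf f) => [L|] f_lim //=.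
have ratio : 0 < b1 / a1 by apply: Rdiv_lt_0_compat.
have shift : 0 < (1 - l) * b2 / (l * a1) by apply: Rdiv_lt_0_compat; nra.
have := incr_le_fprime f_convex f_lim ratio shift.
have -> : b1 / a1 + (1 - l) * b2 / (l * a1) = (l * b1 + (1 - l) * b2) / (l * a1).
  by field; lra.
move/(Rmult_le_compat_l (l * a1)) => /(_ ltac:(nra)) bound.
by apply: (Rle_trans _ _ _ bound); apply: Req_le; field; lra.
Qed.

(* Both masses zero: persp f 0 is linear in b (up to +oo). *)
Lemma persp_convex_zero (l : R) (b1 b2 : R) : 0 < l < 1 -> 0 <= b1 -> 0 <= b2 ->
  erle (persp f (l * 0 + (1 - l) * 0) (l * b1 + (1 - l) * b2))
       (eradd (ermul l (persp f 0 b1)) (ermul (1 - l) (persp f 0 b2))).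
Proof.
have -> : l * 0 + (1 - l) * 0 = 0 by ring.
move=> l01 b1_ge0 b2_ge0.
case: (Req_dec b1 0) => [->|b1_nz]; case: (Req_dec b2 0) => [->|b2_nz].
- by rewrite (_ : _ + _ = 0) ?persp_00 /=; [lra | ring].
- rewrite persp_00 !persp_0_pos; try nra.
  by case: (fprime_inf f) => [L|] //=; lra.
- rewrite persp_00 !persp_0_pos; try nra.
  by case: (fprime_inf f) => [L|] //=; lra.
- rewrite !persp_0_pos; try nra.
  by case: (fprime_inf f) => [L|] //=; lra.
Qed.

(* Joint convexity of the perspective on the region where a > 0 forces
   b > 0 (a joint mass is bounded by the product of its marginals). *)
Lemma persp_convex (l : R) (a1 a2 b1 b2 : R) : 0 < l < 1 ->
  0 <= a1 -> 0 <= a2 -> 0 <= b1 -> 0 <= b2 -> (0 < a1 -> 0 < b1) -> (0 < a2 -> 0 < b2) ->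
  erle (persp f (l * a1 + (1 - l) * a2) (l * b1 + (1 - l) * b2))
       (eradd (ermul l (persp f a1 b1)) (ermul (1 - l) (persp f a2 b2))).
Proof.
move=> l01 a1_ge0 a2_ge0 b1_ge0 b2_ge0 b1_pos b2_pos.
case: (Rle_lt_or_eq_dec _ _ a1_ge0) => [a1_pos|<-];
  case: (Rle_lt_or_eq_dec _ _ a2_ge0) => [a2_pos|<-].
- rewrite !persp_pos //=; last by nra.
  by apply: persp_convex_interior => //; auto.
- by apply: persp_convex_half => //; auto.
- have l01' : 0 < 1 - l < 1 by lra.
  have := persp_convex_half l01' a2_pos (b2_pos a2_pos) b1_ge0.
  rewrite (_ : 1 - (1 - l) = l); last ring.
  rewrite (_ : (1 - l) * a2 + l * 0 = l * 0 + (1 - l) * a2); last ring.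
  rewrite (_ : (1 - l) * b2 + l * b1 = l * b1 + (1 - l) * b2); last ring.
  by rewrite eradd_comm.
- exact: persp_convex_zero.
Qed.

End Perspective.

(* I_f is convex along mixtures of joint pmfs with the same U-marginal:
   then the product of marginals is affine in the mixture, and each summand
   is a jointly convex perspective. *)
Lemma I_f_convex_fixed_margU (f : R -> R) (U V : finType) (p1 p2 : U -> V -> R) (l : R) :
  convex_pos f -> 0 < l < 1 ->
  (forall u v, 0 <= p1 u v) -> (forall u v, 0 <= p2 u v) ->
  (forall u, margU p1 u = margU p2 u) ->
  erle (I_f f (fun u v => l * p1 u v + (1 - l) * p2 u v))
       (eradd (ermul l (I_f f p1)) (ermul (1 - l) (I_f f p2))).
Proof.
move=> f_convex l01 p1_ge0 p2_ge0 same_margU.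
rewrite /I_f; apply: erle_big_mix => u; apply: erle_big_mix => v; rewrite !phi_fE.
have -> : margU (fun u v => l * p1 u v + (1 - l) * p2 u v) u =
          l * margU p1 u + (1 - l) * margU p2 u by apply: rsum_mix.
have -> : margV (fun u v => l * p1 u v + (1 - l) * p2 u v) v =
          l * margV p1 v + (1 - l) * margV p2 v by apply: rsum_mix.
have -> : (l * margU p1 u + (1 - l) * margU p2 u) * (l * margV p1 v + (1 - l) * margV p2 v)
        = l * (margU p1 u * margV p1 v) + (1 - l) * (margU p2 u * margV p2 v).
  by rewrite -same_margU; ring.
have pU1 : p1 u v <= margU p1 u by apply: rsum_ge_term => v'; apply: p1_ge0.
have pV1 : p1 u v <= margV p1 v by apply: rsum_ge_term => u'; apply: p1_ge0.
have pU2 : p2 u v <= margU p2 u by apply: rsum_ge_term => v'; apply: p2_ge0.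
have pV2 : p2 u v <= margV p2 v by apply: rsum_ge_term => u'; apply: p2_ge0.
have := p1_ge0 u v; have := p2_ge0 u v => ge2 ge1.
apply: persp_convex => //; try (apply: Rmult_le_pos; lra);
  by move=> ?; apply: Rmult_lt_0_compat; lra.
Qed.

Lemma I_f_ext (f : R -> R) (U V : finType) (p q : U -> V -> R) :
  (forall u v, p u v = q u v) -> I_f f p = I_f f q.
Proof.
move=> pq; congr I_f.
by apply: functional_extensionality => u; apply: functional_extensionality => v.
Qed.

Section Mixture.
Variables (S X Y Sh : finType).
Implicit Types Q : S -> X -> Y -> Sh -> R.

Definition mix4 (l : R) Q1 Q2 : S -> X -> Y -> Sh -> R :=
  fun s x y sh => l * Q1 s x y sh + (1 - l) * Q2 s x y sh.

Lemma mix4_0 Q1 Q2 : mix4 0 Q1 Q2 = Q2.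
Proof.
do 4 apply: functional_extensionality => ?; rewrite /mix4; ring.
Qed.

Lemma mix4_1 Q1 Q2 : mix4 1 Q1 Q2 = Q1.
Proof.
do 4 apply: functional_extensionality => ?; rewrite /mix4; ring.
Qed.

Lemma Q_S_mix l Q1 Q2 s : Q_S (mix4 l Q1 Q2) s = l * Q_S Q1 s + (1 - l) * Q_S Q2 s.
Proof. by do 3 (apply: rsum_mix => ?). Qed.

Lemma Q_X_mix l Q1 Q2 x : Q_X (mix4 l Q1 Q2) x = l * Q_X Q1 x + (1 - l) * Q_X Q2 x.
Proof. by do 3 (apply: rsum_mix => ?). Qed.

Lemma Q_SSh_mix l Q1 Q2 s sh :
  Q_SSh (mix4 l Q1 Q2) s sh = l * Q_SSh Q1 s sh + (1 - l) * Q_SSh Q2 s sh.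
Proof. by do 2 (apply: rsum_mix => ?). Qed.

Lemma Q_XY_mix l Q1 Q2 x y :
  Q_XY (mix4 l Q1 Q2) x y = l * Q_XY Q1 x y + (1 - l) * Q_XY Q2 x y.
Proof. by do 2 (apply: rsum_mix => ?). Qed.

Lemma mix4_pmf l Q1 Q2 : is_pmf4 Q1 -> is_pmf4 Q2 -> 0 <= l <= 1 -> is_pmf4 (mix4 l Q1 Q2).
Proof.
move=> [Q1_ge0 Q1_sum] [Q2_ge0 Q2_sum] l01; split.
  by move=> s x y sh; rewrite /mix4; have := Q1_ge0 s x y sh; have := Q2_ge0 s x y sh; nra.
rewrite (@rsum_mix _ _ (Q_S Q1) (Q_S Q2) l (1 - l)) ?Q1_sum ?Q2_sum; first ring.
exact: Q_S_mix.
Qed.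

Lemma Q_SSh_ge0 Q : is_pmf4 Q -> forall s sh, 0 <= Q_SSh Q s sh.
Proof. by move=> [Q_ge0 _] s sh; do 2 (apply: rsum_ge0 => ?). Qed.

Lemma margU_Q_SSh Q s : margU (Q_SSh Q) s = Q_S Q s.
Proof.
rewrite /margU /Q_SSh rsum_exch.
by apply: eq_bigr => x _; exact: rsum_exch.
Qed.

Lemma Q_X_pmf Q : is_pmf4 Q -> is_pmf (Q_X Q).
Proof.
move=> [Q_ge0 Q_sum]; split; first by move=> x; do 3 (apply: rsum_ge0 => ?).
by rewrite -Q_sum; exact: rsum_exch.
Qed.

Lemma I_f_SSh_convex (f : R -> R) l Q1 Q2 : convex_pos f -> 0 < l < 1 ->
  is_pmf4 Q1 -> is_pmf4 Q2 -> (forall s, Q_S Q1 s = Q_S Q2 s) ->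
  erle (I_f f (Q_SSh (mix4 l Q1 Q2)))
       (eradd (ermul l (I_f f (Q_SSh Q1))) (ermul (1 - l) (I_f f (Q_SSh Q2)))).
Proof.
move=> f_convex l01 Q1_pmf Q2_pmf same_S.
rewrite (I_f_ext f (Q_SSh_mix l Q1 Q2)).
apply: I_f_convex_fixed_margU => //; try exact: Q_SSh_ge0.
by move=> s; rewrite !margU_Q_SSh.
Qed.

(* Concavity of I_f(Q_{X,Y}) on pmfs satisfying the channel constraint:
   there Q_{X,Y} = Q_X * P_{Y|X} with Q_X mixing linearly, so this is
   the saddle property. *)
Lemma I_f_XY_concave (f : R -> R) (PYX : X -> Y -> R) l Q1 Q2 :
  saddle_property f -> (forall x, is_pmf (PYX x)) -> 0 < l < 1 ->
  is_pmf4 Q1 -> is_pmf4 Q2 ->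
  (forall x y, Q_XY Q1 x y = PYX x y * Q_X Q1 x) ->
  (forall x y, Q_XY Q2 x y = PYX x y * Q_X Q2 x) ->
  erle (eradd (ermul l (I_f f (Q_XY Q1))) (ermul (1 - l) (I_f f (Q_XY Q2))))
       (I_f f (Q_XY (mix4 l Q1 Q2))).
Proof.
move=> [_ f_saddle] PYX_pmf l_in Q1_pmf Q2_pmf Q1_ch Q2_ch.
have chan (Q : S -> X -> Y -> Sh -> R) : (forall x y, Q_XY Q x y = PYX x y * Q_X Q x) ->
    I_f f (Q_XY Q) = I_f f (fun x y => Q_X Q x * PYX x y).
  by move=> Q_ch; apply: I_f_ext => x y; rewrite Q_ch Rmult_comm.
rewrite (chan _ Q1_ch) (chan _ Q2_ch) (@chan (mix4 l Q1 Q2)); last first.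
  by move=> x y; rewrite Q_XY_mix Q_X_mix Q1_ch Q2_ch; ring.
have -> : (fun x y => Q_X (mix4 l Q1 Q2) x * PYX x y) =
          (fun x y => (l * Q_X Q1 x + (1 - l) * Q_X Q2 x) * PYX x y).
  by do 2 apply: functional_extensionality => ?; rewrite Q_X_mix.
by apply: f_saddle => //; exact: Q_X_pmf.
Qed.

End Mixture.

Theorem lemma4p4 (S X Y Sh : finType)
  (s0 : S) (x0 : X) (y0 : Y) (sh0 : Sh)
  (PS : S -> R) (PYX : X -> Y -> R) (f : R -> R) :
  is_pmf PS -> (forall x, is_pmf (PYX x)) ->
  saddle_property f ->
  forall (Q1 Q2 : S -> X -> Y -> Sh -> R) (l : R),
    in_Q_fDPI f PS PYX Q1 -> in_Q_fDPI f PS PYX Q2 -> 0 <= l <= 1 ->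
    in_Q_fDPI f PS PYX (fun s x y sh => l * Q1 s x y sh + (1 - l) * Q2 s x y sh).
Proof.
move=> _ PYX_pmf f_saddle Q1 Q2 l Q1_in Q2_in l01.
change (in_Q_fDPI f PS PYX (mix4 l Q1 Q2)).
case: (Req_dec l 0) => [->|l_nz]; first by rewrite mix4_0.
case: (Req_dec l 1) => [->|l_ne1]; first by rewrite mix4_1.
have {l_nz l_ne1} l_in : 0 < l < 1 by lra.
have f_convex := proj1 f_saddle.
move: Q1_in Q2_in => [Q1_pmf [Q1_S [Q1_ch Q1_dpi]]] [Q2_pmf [Q2_S [Q2_ch Q2_dpi]]].
change (forall x y, Q_XY Q1 x y = PYX x y * Q_X Q1 x) in Q1_ch.
change (forall x y, Q_XY Q2 x y = PYX x y * Q_X Q2 x) in Q2_ch.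
split; [exact: mix4_pmf Q1_pmf Q2_pmf l01 | split; [|split]].
- by move=> s; rewrite Q_S_mix Q1_S Q2_S; ring.
- by move=> x y; rewrite -[LHS]/(Q_XY _ x y) Q_XY_mix Q_X_mix Q1_ch Q2_ch; ring.
- apply: erle_trans (I_f_SSh_convex f_convex l_in Q1_pmf Q2_pmf _) _.
    by move=> s; rewrite Q1_S Q2_S.
  apply: erle_trans (I_f_XY_concave f_saddle PYX_pmf l_in Q1_pmf Q2_pmf Q1_ch Q2_ch).
  by apply: erle_add; apply: erle_mul => //; lra.
Qed.
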